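(* Consider the $n$-body problem in ${\bf S}^2$ with all masses equal. If $n$ is odd, the configuration in which the bodies are placed at the vertices of a regular $n$-gon inscribed in any great circle of ${\bf S}^2$ is a fixed point of the equations of motion. For $n=4$, the configuration in which the bodies are at the vertices of a regular tetrahedron inscribed in ${\bf S}^2$ (e.g. $(0,0,1)$, $(0,2\sqrt2/3,-1/3)$, $(-2/\sqrt6,-\sqrt2/3,-1/3)$, $(2/\sqrt6,-\sqrt2/3,-1/3)$) is also a fixed point.
   Context: The $n$-body problem in ${\bf S}^2$: bodies of masses $m_1,\dots,m_n>0$ have positions ${\bf q}_i=(x_i,y_i,z_i)\in\mathbb R^3$ on the unit sphere ${\bf S}^2=\{{\bf q}:{\bf q}\cdot{\bf q}=1\}$ ($\cdot$ the Euclidean inner product), and satisfy $$\ddot{\bf q}_i=\sum_{j\ne i}\frac{m_j[{\bf q}_j-({\bf q}_i\cdot{\bf q}_j){\bf q}_i]}{[1-({\bf q}_i\cdot{\bf q}_j)^2]^{3/2}}-(\dot{\bf q}_i\cdot\dot{\bf q}_i){\bf q}_i,\qquad {\bf q}_i\cdot{\bf q}_i=1,\ \ {\bf q}_i\cdot\dot{\bf q}_i=0,$$ $i=1,\dots,n$, defined only for configurations with $({\bf q}_i\cdot{\bf q}_j)^2\ne 1$ for all $i\ne j$. A fixed point is a configuration ${\bf q}^0$ (satisfying this nonsingularity condition) such that the constant function ${\bf q}(t)\equiv{\bf q}^0$ solves the equations, equivalently $\sum_{j\ne i}m_j[{\bf q}_j-({\bf q}_i\cdot{\bf q}_j){\bf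 q}_i]/[1-({\bf q}_i\cdot{\bf q}_j)^2]^{3/2}=0$ for every $i$. *)

From Stdlib Require Import Reals Lra.
Open Scope R_scope.

Record vec3 : Type := V3 { vx : R; vy : R; vz : R }.

Definition dot (a b : vec3) : R := vx a * vx b + vy a * vy b + vz a * vz b.
Definition vadd (a b : vec3) : vec3 := V3 (vx a + vx b) (vy a + vy b) (vz a + vz b).
Definition vsub (a b : vec3) : vec3 := V3 (vx a - vx b) (vy a - vy b) (vz a - vz b).
Definition vscale (c : R) (a : vec3) : vec3 := V3 (c * vx a) (c * vy a) (c * vz a).
Definition vzero : vec3 := V3 0 0 0.

(* A configuration of n bodies: q i for i < n (values for i >= n are ignored). *)
Definition config := nat -> vec3.

Definition nonsingular (n : nat) (q : config) : Prop :=
  forall i j, (i < n)%nat -> (j < n)%nat -> i <> j -> (dot (q i) (q j))^2 <> 1.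

Definition on_sphere (n : nat) (q : config) : Prop :=
  forall i, (i < n)%nat -> dot (q i) (q i) = 1.

(* Term of body j acting on body i:
   m_j [q_j - (q_i.q_j) q_i] / [1 - (q_i.q_j)^2]^(3/2),
   with x^(3/2) written as (sqrt x)^3. *)
Definition pair_term (m : nat -> R) (q : config) (i j : nat) : vec3 :=
  let d := dot (q i) (q j) in
  vscale (m j / (sqrt (1 - d^2))^3) (vsub (q j) (vscale d (q i))).

Fixpoint force_upto (m : nat -> R) (q : config) (i k : nat) : vec3 :=
  match k with
  | O => vzero
  | S k' => if Nat.eq_dec k' i then force_upto m q i k'
            else vadd (force_upto m q i k') (pair_term m q i k')
  end.

Definition force (n : nat) (m : nat -> R) (q : config) (i : nat) : vec3 :=
  force_upto m q i n.

Definition fixed_point (n : nat) (m : nat -> R) (q : config) : Prop :=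
  on_sphere n q /\ nonsingular n q /\
  forall i, (i < n)%nat -> force n m q i = vzero.

Definition regular_ngon (n : nat) (u v : vec3) : config :=
  fun k => vadd (vscale (cos (2 * PI * INR k / INR n)) u)
                (vscale (sin (2 * PI * INR k / INR n)) v).

(* Regular tetrahedron inscribed in S^2: four unit vectors, pairwise
   inner product -1/3 (edge length sqrt(8/3), centre at the origin). *)
Definition regular_tetrahedron (q : config) : Prop :=
  on_sphere 4 q /\
  forall i j, (i < 4)%nat -> (j < 4)%nat -> i <> j -> dot (q i) (q j) = -1/3.

(* - Regular n-gon on a great circle.  Writing points of the circle as
     P(t) = cos t u + sin t v, the chord identity
     P(b) - cos(b-a) P(a) = sin(b-a) T(a), with T(a) the unit tangent at P(a),
     shows that every pair term acting on body i is parallel to T(a_i), with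
     coefficient f(j - i) for the function f(x) = m s / |s|^3,
     s = sin(2 pi x / n).  This f is odd and n-periodic, and any such f sums
     to zero over j = 0..n-1, j <> i (pair k with n - k).  For n odd no two
     vertices are antipodal, which gives nonsingularity.
   - Regular tetrahedron.  All pair terms share the coefficient
     c = m / (1 - 1/9)^(3/2), so the force on body i is c (q_0 + ... + q_3);
     the Gram identity |q_0 + ... + q_3|^2 = 4 + 12 (-1/3) = 0 kills it. *)
From Stdlib Require Import Reals.
From Stdlib Require Import Lra Lia Psatz ZArith.
Open Scope R_scope.

Lemma vec_eq (a b : vec3) : vx a = vx b -> vy a = vy b -> vz a = vz b -> a = b.
Proof. destruct a, b; simpl; intros; subst; reflexivity. Qed.

Lemma vadd_vscale (a b : R) (e : vec3) : vadd (vscale a e) (vscale b e) = vscale (a + b) e.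
Proof. apply vec_eq; simpl; ring. Qed.

Lemma dot_self_eq0 (a : vec3) : dot a a = 0 -> a = vzero.
Proof.
  unfold dot; intros H.
  pose proof (Rle_0_sqr (vx a)); pose proof (Rle_0_sqr (vy a));
    pose proof (Rle_0_sqr (vz a)); unfold Rsqr in *.
  apply vec_eq; simpl; nra.
Qed.

Fixpoint sumr (f : nat -> R) (k : nat) : R :=
  match k with O => 0 | S k' => sumr f k' + f k' end.

Lemma sumr_ext (f g : nat -> R) (k : nat) :
  (forall j, (j < k)%nat -> f j = g j) -> sumr f k = sumr g k.
Proof.
  induction k as [|k IH]; simpl; intros H; auto.
  rewrite IH by (intros; apply H; lia). rewrite H by lia. reflexivity.
Qed.

Lemma sumr_split (f : nat -> R) (a b : nat) :
  sumr f (a + b) = sumr f a + sumr (fun j => f (a + j)%nat) b.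
Proof.
  induction b as [|b IH]; simpl.
  - rewrite Nat.add_0_r; ring.
  - rewrite Nat.add_succ_r; simpl. rewrite IH; ring.
Qed.

Lemma sumr_opp (f : nat -> R) (k : nat) : sumr (fun j => - f j) k = - sumr f k.
Proof. induction k as [|k IH]; simpl; [ring | rewrite IH; ring]. Qed.

Lemma sumr_rev (f : nat -> R) (k : nat) : sumr f k = sumr (fun j => f (k - 1 - j)%nat) k.
Proof.
  induction k as [|k IH]; [simpl; ring|].
  change (sumr f k + f k = sumr (fun j => f (S k - 1 - j)%nat) (1 + k)).
  rewrite sumr_split, IH. simpl.
  replace (k - 0 - 0)%nat with k by lia.
  rewrite (sumr_ext (fun j => f (k - 0 - S j)%nat) (fun j => f (k - 1 - j)%nat))
    by (intros; f_equal; lia).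
  ring.
Qed.

Fixpoint skipsum (f : nat -> R) (i k : nat) : R :=
  match k with
  | O => 0
  | S k' => if Nat.eq_dec k' i then skipsum f i k' else skipsum f i k' + f k'
  end.

Lemma skipsum_low (f : nat -> R) (i k : nat) : (k <= i)%nat -> skipsum f i k = sumr f k.
Proof.
  induction k as [|k IH]; simpl; intros; auto.
  destruct (Nat.eq_dec k i); [lia|]. rewrite IH by lia. reflexivity.
Qed.

Lemma skipsum_split (f : nat -> R) (i n : nat) : (i < n)%nat ->
  skipsum f i n = sumr f i + sumr (fun j => f (i + 1 + j)%nat) (n - 1 - i).
Proof.
  intros Hi. replace n with (i + 1 + (n - 1 - i))%nat at 1 by lia.
  induction (n - 1 - i)%nat as [|p IH].
  - replace (i + 1 + 0)%nat with (S i) by lia. simpl.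
    destruct (Nat.eq_dec i i); [|lia]. rewrite skipsum_low by lia. ring.
  - replace (i + 1 + S p)%nat with (S (i + 1 + p)) by lia. simpl.
    destruct (Nat.eq_dec (i + 1 + p) i); [lia|]. rewrite IH. ring.
Qed.

Lemma force_upto_parallel (m : nat -> R) (q : config) (i : nat) (e : vec3) (g : nat -> R) :
  (forall j, j <> i -> pair_term m q i j = vscale (g j) e) ->
  forall k, force_upto m q i k = vscale (skipsum g i k) e.
Proof.
  intros H k; induction k as [|k IH]; simpl.
  - apply vec_eq; simpl; ring.
  - destruct (Nat.eq_dec k i); auto. rewrite IH, H by auto. apply vadd_vscale.
Qed.

Section OddPeriodicSums.
Variable n : nat.
Variable f : R -> R.
Hypothesis f_periodic : forall x, f (x + INR n) = f x.
Hypothesis f_odd : forall x, f (- x) = - f x.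

(* f(1) + ... + f(n-1) = 0: the terms k and n - k cancel. *)
Lemma sum_odd_periodic : sumr (fun j => f (INR (1 + j))) (n - 1) = 0.
Proof.
  set (G := fun j => f (INR (1 + j))).
  assert (Hsym : sumr G (n - 1) = - sumr G (n - 1)).
  { rewrite sumr_rev at 1. rewrite <- sumr_opp. apply sumr_ext. intros j Hj.
    unfold G. rewrite <- f_odd, <- (f_periodic (- INR (1 + j))). f_equal.
    assert (INR (1 + (n - 1 - 1 - j)) + INR (1 + j) = INR n)
      by (rewrite <- plus_INR; f_equal; lia).
    lra. }
  lra.
Qed.

Lemma skipsum_odd_periodic (i : nat) : (i < n)%nat ->
  skipsum (fun j => f (INR j - INR i)) i n = 0.
Proof.
  intros Hi. rewrite skipsum_split by exact Hi.
  set (G := fun j => f (INR (1 + j))).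
  assert (Habove : sumr (fun j => f (INR (i + 1 + j) - INR i)) (n - 1 - i)
                   = sumr G (n - 1 - i)).
  { apply sumr_ext; intros j _. unfold G. f_equal.
    rewrite !plus_INR. simpl. ring. }
  assert (Hbelow : sumr (fun j => f (INR j - INR i)) i
                   = sumr (fun j => G (n - 1 - i + j)%nat) i).
  { apply sumr_ext; intros j Hj. unfold G. rewrite <- f_periodic. f_equal.
    assert (INR (1 + (n - 1 - i + j)) + INR i = INR n + INR j)
      by (rewrite <- !plus_INR; f_equal; lia).
    lra. }
  rewrite Habove, Hbelow, Rplus_comm, <- sumr_split.
  replace (n - 1 - i + i)%nat with (n - 1)%nat by lia.
  apply sum_odd_periodic.
Qed.

End OddPeriodicSums.

Lemma sin2_cos2_pow (x : R) : sin x ^ 2 + cos x ^ 2 = 1.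
Proof. rewrite <- !Rsqr_pow2. apply sin2_cos2. Qed.

Lemma sqrt_one_minus_cos2 (x : R) : sqrt (1 - cos x ^ 2) = Rabs (sin x).
Proof.
  rewrite <- sqrt_Rsqr_abs, Rsqr_pow2. f_equal. pose proof (sin2_cos2_pow x). lra.
Qed.

Definition circle_point (u v : vec3) (t : R) : vec3 :=
  vadd (vscale (cos t) u) (vscale (sin t) v).
Definition circle_tangent (u v : vec3) (t : R) : vec3 :=
  vadd (vscale (- sin t) u) (vscale (cos t) v).

Lemma regular_ngon_circle (n : nat) (u v : vec3) (k : nat) :
  regular_ngon n u v k = circle_point u v (2 * PI * INR k / INR n).
Proof. reflexivity. Qed.

Lemma dot_circle_point (u v : vec3) (a b : R) :
  dot u u = 1 -> dot v v = 1 -> dot u v = 0 ->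
  dot (circle_point u v a) (circle_point u v b) = cos (b - a).
Proof.
  intros Hu Hv Huv. rewrite cos_minus.
  transitivity (cos a * cos b * dot u u + (cos a * sin b + sin a * cos b) * dot u v
                + sin a * sin b * dot v v).
  - unfold dot, circle_point, vadd, vscale; simpl; ring.
  - rewrite Hu, Hv, Huv. ring.
Qed.

(* The chord identity: removing from P(b) its component along P(a) leaves a
   multiple of the tangent at P(a).  No hypothesis on u, v is needed. *)
Lemma circle_chord (u v : vec3) (a b : R) :
  vsub (circle_point u v b) (vscale (cos (b - a)) (circle_point u v a))
  = vscale (sin (b - a)) (circle_tangent u v a).
Proof.
  rewrite cos_minus, sin_minus. pose proof (sin2_cos2_pow a) as Ha.
  unfold circle_point, circle_tangent.
  apply vec_eq; simpl; apply Rminus_diag_uniq.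
  - transitivity ((1 - sin a ^ 2 - cos a ^ 2) * (cos b * vx u + sin b * vx v)); [ring|].
    rewrite <- Ha; ring.
  - transitivity ((1 - sin a ^ 2 - cos a ^ 2) * (cos b * vy u + sin b * vy v)); [ring|].
    rewrite <- Ha; ring.
  - transitivity ((1 - sin a ^ 2 - cos a ^ 2) * (cos b * vz u + sin b * vz v)); [ring|].
    rewrite <- Ha; ring.
Qed.

Lemma odd_half_turn (n i j : nat) (k : Z) :
  Nat.Odd n -> (i < n)%nat -> (j < n)%nat ->
  (2 * (Z.of_nat j - Z.of_nat i) = k * Z.of_nat n)%Z -> i = j.
Proof.
  intros [p Hp] Hi Hj Hk.
  assert (Z.of_nat n = 2 * Z.of_nat p + 1)%Z by lia.
  assert (Hb : (-2 < k < 2)%Z) by nia.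
  assert (k = -1 \/ k = 0 \/ k = 1)%Z as [->|[->| ->]] by lia; lia.
Qed.

Lemma odd_ngon_not_antipodal (n i j : nat) :
  Nat.Odd n -> (i < n)%nat -> (j < n)%nat ->
  cos (2 * PI * (INR j - INR i) / INR n) ^ 2 = 1 -> i = j.
Proof.
  intros Hodd Hi Hj Hcos.
  assert (HnR : 0 < INR n) by (apply lt_0_INR; lia).
  set (x := 2 * PI * (INR j - INR i) / INR n) in *.
  assert (Hs : sin x = 0) by (pose proof (sin2_cos2_pow x); nra).
  destruct (sin_eq_0_0 x Hs) as [k Hk]. unfold x in Hk.
  apply (odd_half_turn n i j k Hodd Hi Hj), eq_IZR.
  rewrite mult_IZR, mult_IZR, minus_IZR, <- !INR_IZR_INZ.
  pose proof PI_RGT_0.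
  apply (Rmult_eq_reg_l (PI / INR n)); [|apply Rgt_not_eq, Rdiv_lt_0_compat; lra].
  replace (PI / INR n * (IZR 2 * (INR j - INR i))) with
    (2 * PI * (INR j - INR i) / INR n) by (simpl; field; lra).
  rewrite Hk. field. lra.
Qed.

(* The coefficient of the pair terms along the tangent, as a function of j - i. *)
Definition ngon_coeff (n : nat) (m x : R) : R :=
  m * sin (2 * PI * x / INR n) / (Rabs (sin (2 * PI * x / INR n))) ^ 3.

Lemma ngon_coeff_periodic (n : nat) (m x : R) : (0 < n)%nat ->
  ngon_coeff n m (x + INR n) = ngon_coeff n m x.
Proof.
  intros Hn. assert (0 < INR n) by (apply lt_0_INR; lia).
  unfold ngon_coeff.
  replace (2 * PI * (x + INR n) / INR n) with (2 * PI * x / INR n + 2 * PI) by (field; lra).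
  rewrite sin_plus, sin_2PI, cos_2PI. f_equal; [|do 2 f_equal]; ring.
Qed.

Lemma ngon_coeff_odd (n : nat) (m x : R) : ngon_coeff n m (- x) = - ngon_coeff n m x.
Proof.
  unfold ngon_coeff.
  replace (2 * PI * - x / INR n) with (- (2 * PI * x / INR n)) by (unfold Rdiv; ring).
  rewrite sin_neg, Rabs_Ropp. unfold Rdiv; ring.
Qed.

Lemma ngon_fixed_point (n : nat) (m : R) (u v : vec3) :
  Nat.Odd n -> dot u u = 1 -> dot v v = 1 -> dot u v = 0 ->
  fixed_point n (fun _ => m) (regular_ngon n u v).
Proof.
  intros Hodd Hu Hv Huv.
  assert (Hn : (0 < n)%nat) by (destruct Hodd; lia).
  assert (HnR : 0 < INR n) by (apply lt_0_INR; lia).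
  set (angle := fun k => 2 * PI * INR k / INR n).
  assert (Hangle : forall i j, angle j - angle i = 2 * PI * (INR j - INR i) / INR n)
    by (intros; unfold angle; field; lra).
  assert (Hdot : forall i j, dot (regular_ngon n u v i) (regular_ngon n u v j)
                             = cos (2 * PI * (INR j - INR i) / INR n)).
  { intros i j. rewrite !regular_ngon_circle, dot_circle_point by assumption.
    fold (angle i) (angle j). rewrite Hangle. reflexivity. }
  split; [|split].
  - intros i _. rewrite Hdot, Rminus_diag.
    replace (2 * PI * 0 / INR n) with 0 by (field; lra). apply cos_0.
  - intros i j Hi Hj Hij Hsing. rewrite Hdot in Hsing.
    exact (Hij (odd_ngon_not_antipodal n i j Hodd Hi Hj Hsing)).
  - intros i Hi. unfold force.
    rewrite (force_upto_parallel _ _ i (circle_tangent u v (angle i))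
               (fun j => ngon_coeff n m (INR j - INR i))).
    + rewrite (skipsum_odd_periodic n (ngon_coeff n m)); auto using ngon_coeff_periodic,
        ngon_coeff_odd.
      apply vec_eq; simpl; ring.
    + intros j _. unfold pair_term. cbv zeta. rewrite Hdot, <- Hangle.
      rewrite sqrt_one_minus_cos2, !regular_ngon_circle. fold (angle i) (angle j).
      rewrite circle_chord. unfold ngon_coeff. rewrite <- Hangle.
      apply vec_eq; simpl; unfold Rdiv; ring.
Qed.

Lemma regular_tetrahedron_centered (q : config) : regular_tetrahedron q ->
  vadd (vadd (vadd (q 0%nat) (q 1%nat)) (q 2%nat)) (q 3%nat) = vzero.
Proof.
  intros [Hs Hd]. apply dot_self_eq0.
  transitivity (dot (q 0%nat) (q 0%nat) + dot (q 1%nat) (q 1%nat)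
                + dot (q 2%nat) (q 2%nat) + dot (q 3%nat) (q 3%nat)
    + 2 * (dot (q 0%nat) (q 1%nat) + dot (q 0%nat) (q 2%nat) + dot (q 0%nat) (q 3%nat)
           + dot (q 1%nat) (q 2%nat) + dot (q 1%nat) (q 3%nat) + dot (q 2%nat) (q 3%nat))).
  - unfold dot, vadd; simpl; ring.
  - rewrite !Hs, !Hd by lia. lra.
Qed.

(* Part 2: the regular tetrahedron, equal masses.  With c the common pair
   coefficient, the force on every body is c (q_0 + q_1 + q_2 + q_3). *)
Lemma tetrahedron_fixed_point (m : R) (q : config) :
  regular_tetrahedron q -> fixed_point 4 (fun _ => m) q.
Proof.
  intros Htet. pose proof (regular_tetrahedron_centered q Htet) as Hcenter.
  destruct Htet as [Hs Hd].
  set (c := m / (sqrt (1 - (-1/3)^2))^3).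
  assert (Hpair : forall i j, (i < 4)%nat -> (j < 4)%nat -> i <> j ->
            pair_term (fun _ => m) q i j = vscale c (vsub (q j) (vscale (-1/3) (q i)))).
  { intros i j Hi Hj Hij. unfold pair_term. cbv zeta. rewrite Hd by auto. reflexivity. }
  split; [exact Hs | split].
  - intros i j Hi Hj Hij. rewrite Hd by auto. lra.
  - intros i Hi.
    transitivity (vscale c (vadd (vadd (vadd (q 0%nat) (q 1%nat)) (q 2%nat)) (q 3%nat))).
    + unfold force.
      destruct i as [|[|[|[|i]]]]; [| | | |lia]; simpl force_upto;
        repeat match goal with |- context [Nat.eq_dec ?a ?b] =>
          destruct (Nat.eq_dec a b); try (exfalso; lia) end;
        rewrite !Hpair by lia; apply vec_eq; simpl; field.
    + rewrite Hcenter. apply vec_eq; simpl; ring.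
Qed.

Theorem mainTheorem3 :
  (forall (n : nat) (m : R) (u v : vec3),
      Nat.Odd n -> 0 < m ->
      dot u u = 1 -> dot v v = 1 -> dot u v = 0 ->
      fixed_point n (fun _ => m) (regular_ngon n u v))
  /\
  (forall (m : R) (q : config),
      0 < m -> regular_tetrahedron q ->
      fixed_point 4 (fun _ => m) q).
Proof.
  split.
  - intros n m u v Hodd _. apply ngon_fixed_point, Hodd.
  - intros m q _. apply tetrahedron_fixed_point.
Qed.
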